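(* Let $N\ge 1$, let $q\in\mathbb{C}$ with $[k]_q\neq 0$ for all $k\ge1$, and set $g(k)=[k]_q$ for $k\ge 1$ (so $g(1)=1$, $g(2)=1+q$). Let $u^0:\mathbb{Z}^N\times[0,\infty)\to\mathbb{C}$ be differentiable in $t$ and satisfy, for all $(x_N,\dots,x_1)\in\mathbb{Z}^N$ and $t\ge 0$, $$\frac{d}{dt}u^0(x_N,\dots,x_1;t)=\sum_{i=1}^N u^0(x_N,\dots,x_{i+1},x_i-1,x_{i-1},\dots,x_1;t)-N\,u^0(x_N,\dots,x_1;t),$$ and, for every $2\le i\le N$ and all integer arguments, $$u^0(\dots,x_{i+1},x_i,x_i-1,x_{i-2},\dots;t)=q\,u^0(\dots,x_{i+1},x_i-1,x_i,x_{i-2},\dots;t)-(q-1)\,u^0(\dots,x_{i+1},x_i,x_i,x_{i-2},\dots;t).$$ Define, for $X\in\mathbf{S}$, $u(X;t)=u^0(X;t)\big/\prod_{\mathbf{x}\in\Lambda(X)}\prod_{k=1}^{\eta_X(\mathbf{x})}g(k)$. Let $X\in\mathbf{S}$ be such that, for some $K\ge0$, $n\ge1$ with $K+n\le N$, $x_{K+1}=\cdots=x_{K+n}=x$ and every site of $\Lambda(X)$ other than $x$ is occupied by exactly one particle. Then $$\frac{d}{dt}u(X;t)=\sum_{\mathbf{x}\in\Lambda(X)} g\big(\eta_{X^{\mathbf{x}}}(\mathbf{x}-1)\big)\,u(X^{\mathbf{x}};t)-\Big(\sum_{\mathbf{x}\in\Lambda(X)}g(\eta_X(\mathbf{x}))\Big)u(X;t),$$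 i.e. $u$ satisfies at $X$ the master equation of the totally asymmetric zero range process with jump rates $g$.
   Context: $[k]_q:=1+q+\cdots+q^{k-1}$. $\mathbf{S}=\{(x_N,\dots,x_1)\in\mathbb{Z}^N: x_N\le x_{N-1}\le\cdots\le x_1\}$ is the set of configurations of $N$ indistinguishable particles on $\mathbb{Z}$ ($x_j$ = position of the $j$-th right-most particle). For $X\in\mathbf{S}$, $\Lambda(X)$ is the set of occupied sites and $\eta_X(\mathbf{x})$ is the number of particles of $X$ at site $\mathbf{x}$. For $\mathbf{x}\in\Lambda(X)$, $X^{\mathbf{x}}\in\mathbf{S}$ denotes the configuration obtained from $X$ by moving one particle from site $\mathbf{x}$ to site $\mathbf{x}-1$. (In the totally asymmetric zero range process with rates $g$, a site occupied by $k$ particles emits one particle to the right neighbour at rate $g(k)$.) *)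

From Stdlib Require Import Reals ZArith List.
Import ListNotations.
Open Scope R_scope.

Definition CC : Type := (R * R)%type.
Definition Cre (z : CC) : R := fst z.
Definition Cim (z : CC) : R := snd z.
Definition RtoC (r : R) : CC := (r, 0).
Definition Czero : CC := (0, 0).
Definition Cone : CC := (1, 0).
Definition Cadd (z w : CC) : CC := (fst z + fst w, snd z + snd w).
Definition Copp (z : CC) : CC := (- fst z, - snd z).
Definition Csub (z w : CC) : CC := Cadd z (Copp w).
Definition Cmul (z w : CC) : CC :=
  (fst z * fst w - snd z * snd w, fst z * snd w + snd z * fst w).
Definition Cinv (z : CC) : CC :=
  let d := fst z * fst z + snd z * snd z in (fst z / d, - snd z / d).
Definition Cdiv (z w : CC) : CC := Cmul z (Cinv w).
Definition Cnorm (z : CC) : R := sqrt (fst z * fst z + snd z * snd z).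
Fixpoint Cpow (z : CC) (n : nat) : CC :=
  match n with O => Cone | S m => Cmul z (Cpow z m) end.

Definition Csum (l : list CC) : CC := fold_right Cadd Czero l.
Definition Cprod (l : list CC) : CC := fold_right Cmul Cone l.

Definition qint (q : CC) (k : nat) : CC := Csum (map (Cpow q) (seq 0 k)).
Definition qfact (q : CC) (n : nat) : CC := Cprod (map (qint q) (seq 1 n)).

Definition has_deriv_nonneg (f : R -> CC) (t : R) (l : CC) : Prop :=
  forall eps : R, 0 < eps -> exists delta : R, 0 < delta /\
    forall h : R, h <> 0 -> Rabs h < delta -> 0 <= t + h ->
      Cnorm (Csub (Cmul (RtoC (/ h)) (Csub (f (t + h)) (f t))) l) < eps.

(* A point (x_N, ..., x_1) of Z^N is the list [x_N; ...; x_1] of length N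
   (written in the same left-to-right order as in the paper).
   coord l i = x_i (1 <= i <= N), upd l i y replaces x_i by y. *)
Definition coord (l : list Z) (i : nat) : Z := nth (length l - i)%nat l 0%Z.

Fixpoint set_nth (n : nat) (l : list Z) (y : Z) : list Z :=
  match l, n with
  | [], _ => []
  | _ :: l', O => y :: l'
  | a :: l', S m => a :: set_nth m l' y
  end.
Definition upd (l : list Z) (i : nat) (y : Z) : list Z :=
  set_nth (length l - i)%nat l y.

Definition in_S (X : list Z) : Prop := forall i : nat,
  (1 <= i)%nat -> (i < length X)%nat -> (coord X (S i) <= coord X i)%Z.

Definition eta (X : list Z) (x : Z) : nat := count_occ Z.eq_dec X x.
Definition Lambda (X : list Z) : list Z := nodup Z.eq_dec X.

(* X^x : move one particle from site x to site x-1.  In the nondecreasing list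
   [x_N; ...; x_1] we move the left-most particle at x, which keeps the list
   nondecreasing. *)
Fixpoint move_first (x : Z) (X : list Z) : list Z :=
  match X with
  | [] => []
  | a :: X' => if Z.eq_dec a x then (x - 1)%Z :: X' else a :: move_first x X'
  end.
Definition Xmove (X : list Z) (x : Z) : list Z := move_first x X.

Definition uZRP (q : CC) (u0 : list Z -> R -> CC) (X : list Z) (t : R) : CC :=
  Cdiv (u0 X t) (Cprod (map (fun x => qfact q (eta X x)) (Lambda X))).

From Stdlib Require Import Reals ZArith List Sorted Lia Lra Field.
Import ListNotations.
Open Scope R_scope.

(* The argument
   works for every X in S.

   1. In a maximal block of e+1 particles at site y, iterating the exchange condition
      moves a decrement to the front of the block:
        u0(.., y^p, y-1, y^(e-p), ..) = q^p u0(.., y-1, y^e, ..) - (q^p - 1) u0(.., y^(e+1), ..),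
      so the e+1 decrements of the block sum to
        [e+1]_q u0(X^y) - ([e+1]_q - (e+1)) u0(X)                (block_decrements_sum).
   2. Summing over the blocks of a sorted configuration, the right-hand side of the free
      equation becomes  sum_{y in Lambda(X)} [eta_X(y)]_q (u0(X^y) - u0(X))  (decrements_sum).
   3. The normalisation satisfies D(X^y) [eta_X(y)]_q = D(X) [eta_{X^y}(y-1)]_q
      (norm_factor_move), which turns [eta_X(y)]_q u0(X^y) / D(X) into the jump term
      [eta_{X^y}(y-1)]_q u(X^y).
   Dividing the free equation by the constant D(X) then gives the master equation. *)

Lemma CC_ring : ring_theory Czero Cone Cadd Cmul Csub Copp (@eq CC).
Proof.
  constructor; intros; repeat match goal with z : CC |- _ => destruct z end;
  unfold Csub, Cadd, Cmul, Copp, Czero, Cone; simpl; f_equal; ring.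
Qed.

Lemma CC_field : field_theory Czero Cone Cadd Cmul Csub Copp Cdiv Cinv (@eq CC).
Proof.
  constructor.
  - exact CC_ring.
  - unfold Cone, Czero; intro H; injection H; lra.
  - reflexivity.
  - intros [a b] Hnz. unfold Cmul, Cinv, Cone; simpl.
    assert (Hd : a * a + b * b <> 0).
    { intro Hd. apply Hnz. unfold Czero.
      assert (a = 0) by nra. assert (b = 0) by nra. subst; reflexivity. }
    f_equal; field; auto.
Qed.

Add Field CCfield : CC_field.

Lemma Cnorm_mul a b : Cnorm (Cmul a b) = Cnorm a * Cnorm b.
Proof.
  destruct a as [a1 a2], b as [b1 b2]; unfold Cnorm, Cmul; simpl.
  rewrite <- sqrt_mult by nra. f_equal; ring.
Qed.

Lemma RtoC_S n : RtoC (INR (S n)) = Cadd (RtoC (INR n)) Cone.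
Proof. rewrite S_INR. unfold RtoC, Cadd, Cone; simpl; f_equal; ring. Qed.

Lemma RtoC_add a b : RtoC (a + b) = Cadd (RtoC a) (RtoC b).
Proof. unfold RtoC, Cadd; simpl; f_equal; ring. Qed.

Lemma Csum_app l1 l2 : Csum (l1 ++ l2) = Cadd (Csum l1) (Csum l2).
Proof. induction l1 as [|a l1 IH]; simpl; [ring|]. unfold Csum in *; simpl; rewrite IH; ring. Qed.

Lemma Csum_rev l : Csum (rev l) = Csum l.
Proof. induction l as [|a l IH]; simpl; auto. rewrite Csum_app, IH. unfold Csum; simpl. ring. Qed.

Lemma Csum_weighted_differences (e w : Z -> CC) (l : list Z) (u c : CC) :
  Csum (map (fun y => Cmul (Cmul (e y) (w y)) c) l) =
  Cadd (Cmul (Csum (map (fun z => Cmul (e z) (Csub (w z) u)) l)) c)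
       (Cmul (Csum (map e l)) (Cmul u c)).
Proof. induction l as [|a l IH]; simpl; unfold Csum in *; simpl; [ring|]. rewrite IH. ring. Qed.

(* Summing the family q^p A - (q^p - 1) B over exponents p in l; with l = 0..e
   the sum of the q^p is the q-integer [e+1]_q. *)
Lemma Csum_geometric q (A B : CC) (l : list nat) :
  Csum (map (fun p => Csub (Cmul (Cpow q p) A) (Cmul (Csub (Cpow q p) Cone) B)) l) =
  Csub (Cmul (Csum (map (Cpow q) l)) A)
       (Cmul (Csub (Csum (map (Cpow q) l)) (RtoC (INR (length l)))) B).
Proof.
  induction l as [|p l IH]; simpl map; simpl length.
  - simpl. change (RtoC 0) with Czero. ring.
  - simpl Csum. rewrite IH, RtoC_S. ring.
Qed.

Lemma Cprod_nz l : (forall z, In z l -> z <> Czero) -> Cprod l <> Czero.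
Proof.
  induction l as [|a l IH]; simpl; intros H.
  - unfold Cone, Czero; intro E; injection E; lra.
  - intro E. apply (H a (or_introl eq_refl)).
    replace a with (Cmul (Cmul a (Cprod l)) (Cinv (Cprod l)))
      by (field; apply IH; auto).
    rewrite E. ring.
Qed.

Lemma deriv_scale f t l c :
  has_deriv_nonneg f t l ->
  has_deriv_nonneg (fun s => Cmul (f s) c) t (Cmul l c).
Proof.
  intros H eps Heps.
  assert (Hc : 0 <= Cnorm c) by (unfold Cnorm; apply sqrt_pos).
  set (eps' := eps / (Cnorm c + 1)).
  assert (Heps' : 0 < eps') by (unfold eps'; apply Rdiv_lt_0_compat; lra).
  assert (Hprod : eps' * (Cnorm c + 1) = eps) by (unfold eps'; field; lra).
  destruct (H eps' Heps') as [d [Hd Hh]].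
  exists d; split; auto. intros h H1 H2 H3.
  specialize (Hh h H1 H2 H3).
  replace (Csub (Cmul (RtoC (/ h)) (Csub (Cmul (f (t + h)) c) (Cmul (f t) c))) (Cmul l c))
    with (Cmul (Csub (Cmul (RtoC (/ h)) (Csub (f (t + h)) (f t))) l) c) by ring.
  rewrite Cnorm_mul.
  set (err := Cnorm _) in *.
  assert (0 <= err) by (unfold err, Cnorm; apply sqrt_pos).
  nra.
Qed.

(* decr p Y decrements the entry of Y at (0-based, left-to-right) position p. *)
Definition decr (p : nat) (Y : list Z) : list Z := set_nth p Y (nth p Y 0%Z - 1).

Lemma set_nth_app L M p v : set_nth (length L + p) (L ++ M) v = L ++ set_nth p M v.
Proof. induction L as [|a L IH]; simpl; auto. rewrite IH; reflexivity. Qed.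

Lemma decr_app L M p : decr (length L + p) (L ++ M) = L ++ decr p M.
Proof.
  unfold decr. rewrite set_nth_app. do 2 f_equal.
  induction L as [|a L IH]; simpl; auto.
Qed.

Lemma decr_repeat y p e M : (p <= e)%nat ->
  decr p (repeat y (S e) ++ M) = repeat y p ++ (y - 1)%Z :: repeat y (e - p) ++ M.
Proof.
  revert e; induction p as [|p IH]; intros e He.
  - simpl. rewrite Nat.sub_0_r. reflexivity.
  - destruct e as [|e]; [lia|].
    change (repeat y (S (S e)) ++ M) with ([y] ++ (repeat y (S e) ++ M)).
    rewrite (decr_app [y] _ p), IH by lia. reflexivity.
Qed.

Lemma repeat_snoc (y : Z) k M : repeat y k ++ y :: M = repeat y (S k) ++ M.
Proof. induction k as [|k IH]; simpl; auto. rewrite IH; reflexivity. Qed.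

(* The free equation decrements coordinate i = position length X - i; summing over
   all coordinates is the same as summing over all positions. *)
Lemma coordinate_sum_as_positions (G : list Z -> CC) X :
  Csum (map (fun i => G (upd X i (coord X i - 1)%Z)) (seq 1 (length X))) =
  Csum (map (fun p => G (decr p X)) (seq 0 (length X))).
Proof.
  assert (Hrev : forall (F : nat -> CC) n,
    map (fun i => F (n - i)%nat) (seq 1 n) = rev (map F (seq 0 n))).
  { intros F n; revert F; induction n as [|n IH]; intros F; [reflexivity|].
    rewrite seq_S, map_app. cbn [map]. replace (S n - (1 + n))%nat with 0%nat by lia.
    rewrite (map_ext_in _ (fun i => (fun p => F (S p)) (n - i)%nat)).
    2: { intros i Hi. apply in_seq in Hi. f_equal. lia. }
    rewrite (IH (fun p => F (S p))). cbn [seq map rev]. rewrite <- seq_shift, map_map. reflexivity. }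
  rewrite <- (Csum_rev (map _ (seq 0 _))), <- Hrev. reflexivity.
Qed.

Lemma count_move_other z X w : w <> z -> w <> (z - 1)%Z ->
  count_occ Z.eq_dec (move_first z X) w = count_occ Z.eq_dec X w.
Proof.
  intros H1 H2; induction X as [|a X IH]; simpl; auto.
  destruct (Z.eq_dec a z) as [->|]; simpl.
  - destruct (Z.eq_dec (z - 1) w); [congruence|]. destruct (Z.eq_dec z w); congruence.
  - destruct (Z.eq_dec a w); auto.
Qed.

Lemma count_move_from z X :
  count_occ Z.eq_dec (move_first z X) z = pred (count_occ Z.eq_dec X z).
Proof.
  induction X as [|a X IH]; simpl; auto.
  destruct (Z.eq_dec a z) as [->|]; simpl.
  - destruct (Z.eq_dec (z - 1) z); [lia|]. destruct (Z.eq_dec z z); congruence.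
  - destruct (Z.eq_dec a z); [congruence|]. auto.
Qed.

Lemma count_move_to z X : In z X ->
  count_occ Z.eq_dec (move_first z X) (z - 1)%Z = S (count_occ Z.eq_dec X (z - 1)%Z).
Proof.
  induction X as [|a X IH]; simpl; [tauto|]. intros Hin.
  destruct (Z.eq_dec a z) as [->|Hne]; simpl.
  - destruct (Z.eq_dec (z - 1) (z - 1)); [|congruence].
    destruct (Z.eq_dec z (z - 1)); [lia|]. reflexivity.
  - destruct Hin as [|Hin]; [congruence|]. destruct (Z.eq_dec a (z - 1)); auto.
Qed.

Lemma move_first_incl z X : incl (move_first z X) ((z - 1)%Z :: X).
Proof.
  induction X as [|a X IH]; simpl; intros w Hw; [tauto|].
  destruct (Z.eq_dec a z) as [->|]; destruct Hw as [<-|Hw]; simpl; auto.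
  destruct (IH w Hw); auto.
Qed.

Lemma move_first_repeat z y k M : z <> y ->
  move_first z (repeat y k ++ M) = repeat y k ++ move_first z M.
Proof.
  intros H; induction k as [|k IH]; simpl; auto.
  destruct (Z.eq_dec y z); [congruence|]. rewrite IH; auto.
Qed.

Lemma count_repeat y n z :
  count_occ Z.eq_dec (repeat y n) z = if Z.eq_dec y z then n else 0%nat.
Proof. induction n; simpl; destruct (Z.eq_dec y z); auto. Qed.

Lemma nodup_repeat y e M : ~ In y M ->
  nodup Z.eq_dec (repeat y (S e) ++ M) = y :: nodup Z.eq_dec M.
Proof.
  intros H; induction e as [|e IH].
  - simpl. destruct (in_dec Z.eq_dec y M); tauto.
  - change (repeat y (S (S e)) ++ M) with (y :: (repeat y (S e) ++ M)).
    cbn [nodup]. destruct (in_dec Z.eq_dec y (repeat y (S e) ++ M)) as [|Hn]; [exact IH|].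
    exfalso. apply Hn. simpl; auto.
Qed.

Lemma sorted_first_block Y y : Sorted Z.le (y :: Y) -> exists e M,
  y :: Y = repeat y (S e) ++ M /\ (forall z, In z M -> (y < z)%Z) /\ Sorted Z.le M.
Proof.
  revert y; induction Y as [|a Y IH]; intros y HS.
  - exists 0%nat, []; simpl; repeat split; auto. intros z [].
  - apply Sorted_inv in HS as [HS Hh]. apply HdRel_inv in Hh.
    destruct (Z.eq_dec a y) as [->|Hne].
    + destruct (IH y HS) as [e [M [E [H1 H2]]]].
      exists (S e), M. rewrite E. repeat split; auto.
    + exists 0%nat, (a :: Y). repeat split; auto.
      apply Sorted_StronglySorted in HS; [|intros ? ? ?; lia].
      apply StronglySorted_inv in HS as [_ HF]. rewrite Forall_forall in HF.
      intros z [<-|Hz]; [lia|]. specialize (HF z Hz). lia.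
Qed.

Lemma in_S_sorted X : in_S X -> Sorted Z.le X.
Proof.
  intros H.
  assert (Hnth : forall j, (S j < length X)%nat -> (nth j X 0 <= nth (S j) X 0)%Z).
  { intros j Hj. specialize (H (length X - S j)%nat ltac:(lia) ltac:(lia)). unfold coord in H.
    replace (length X - S (length X - S j))%nat with j in H by lia.
    replace (length X - (length X - S j))%nat with (S j) in H by lia. exact H. }
  clear H. induction X as [|a X IH]; constructor.
  - apply IH. intros j Hj. apply (Hnth (S j)). simpl; lia.
  - destruct X; constructor. apply (Hnth 0%nat). simpl; lia.
Qed.

Definition reset_at (f : Z -> CC) (a : Z) (w : Z) : CC := if Z.eq_dec w a then Cone else f w.

Lemma reset_at_other f a b : b <> a -> reset_at f a b = f b.
Proof. unfold reset_at; destruct (Z.eq_dec b a); congruence. Qed.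

Lemma Cprod_extract f S a : NoDup S -> In a S ->
  Cprod (map f S) = Cmul (f a) (Cprod (map (reset_at f a) S)).
Proof.
  induction S as [|b S IH]; simpl; intros Hnd Hin; [tauto|].
  inversion Hnd as [|? ? HbS HS]; subst.
  destruct Hin as [->|Hin].
  - assert (E : map (reset_at f a) S = map f S).
    { apply map_ext_in. intros w Hw. apply reset_at_other. congruence. }
    rewrite E. unfold reset_at at 1. destruct (Z.eq_dec a a); [ring|congruence].
  - rewrite IH, reset_at_other by (auto; congruence). ring.
Qed.

Lemma Cprod_support (f : Z -> CC) (S T : list Z) : NoDup S -> NoDup T -> incl T S ->
  (forall w, In w S -> ~ In w T -> f w = Cone) ->
  Cprod (map f S) = Cprod (map f T).
Proof.
  revert f; induction T as [|a T IH]; intros f HS HT Hinc Hf.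
  - simpl. clear -Hf. induction S as [|b S IHS]; simpl; auto.
    rewrite IHS by (intros w Hw; apply Hf; simpl; auto). rewrite Hf by (simpl; auto). ring.
  - inversion HT as [|? ? HaT HT']; subst.
    rewrite (Cprod_extract f S a) by (auto; apply Hinc; simpl; auto).
    simpl. f_equal. rewrite (IH (reset_at f a)); auto.
    + f_equal. apply map_ext_in. intros w Hw. apply reset_at_other. congruence.
    + intros w Hw. apply Hinc; simpl; auto.
    + intros w Hw Hn. unfold reset_at. destruct (Z.eq_dec w a); auto.
      apply Hf; auto. simpl; intros [|]; auto.
Qed.

Lemma qfact_S q n : qfact q (S n) = Cmul (qfact q n) (qint q (S n)).
Proof.
  unfold qfact. rewrite seq_S, map_app. unfold Cprod. rewrite fold_right_app.
  simpl. replace (1 + n)%nat with (S n) by lia.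
  induction (map (qint q) (seq 1 n)) as [|a l IH]; simpl; [ring|]. rewrite IH. ring.
Qed.

Definition norm_factor (q : CC) (X : list Z) : CC :=
  Cprod (map (fun z => qfact q (eta X z)) (Lambda X)).

Lemma norm_factor_nz q X : (forall k : nat, (1 <= k)%nat -> qint q k <> Czero) ->
  norm_factor q X <> Czero.
Proof.
  intros Hq. apply Cprod_nz. intros z Hz. apply in_map_iff in Hz as [w [<- _]].
  apply Cprod_nz. intros c Hc. apply in_map_iff in Hc as [k [<- Hk]].
  apply in_seq in Hk. apply Hq; lia.
Qed.

Lemma norm_factor_on_support q X S : NoDup S -> incl X S ->
  norm_factor q X = Cprod (map (fun z => qfact q (eta X z)) S).
Proof.
  intros HS Hincl. unfold norm_factor, Lambda. symmetry. apply Cprod_support; auto.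
  - apply NoDup_nodup.
  - intros w Hw. apply nodup_In in Hw. auto.
  - intros w _ Hn. assert (Hn' : ~ In w X) by (intro; apply Hn; apply nodup_In; auto).
    unfold eta. rewrite (proj1 (count_occ_not_In Z.eq_dec X w) Hn'). reflexivity.
Qed.

(* Moving a particle from z to z-1 changes D only through the factors at z and z-1:
   D(X^z) [eta_X(z)]_q = D(X) [eta_{X^z}(z-1)]_q. *)
Lemma norm_factor_move q X z : In z X ->
  Cmul (norm_factor q (move_first z X)) (qint q (eta X z)) =
  Cmul (norm_factor q X) (qint q (eta (move_first z X) (z - 1)%Z)).
Proof.
  intros Hz.
  set (S := nodup Z.eq_dec ((z - 1)%Z :: X)).
  assert (HS : NoDup S) by apply NoDup_nodup.
  assert (HzS : In z S) by (apply nodup_In; simpl; auto).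
  assert (Hz1S : In (z - 1)%Z S) by (apply nodup_In; simpl; auto).
  rewrite (norm_factor_on_support q X S), (norm_factor_on_support q (move_first z X) S); auto.
  2: { intros w Hw. apply nodup_In, move_first_incl, Hw. }
  2: { intros w Hw. apply nodup_In. simpl; auto. }
  set (F1 := fun w => qfact q (eta (move_first z X) w)).
  set (F2 := fun w => qfact q (eta X w)).
  rewrite (Cprod_extract F1 S z), (Cprod_extract (reset_at F1 z) S (z - 1)%Z) by auto.
  rewrite (Cprod_extract F2 S z), (Cprod_extract (reset_at F2 z) S (z - 1)%Z) by auto.
  assert (Hne : (z - 1)%Z <> z) by lia.
  assert (Hrest : map (reset_at (reset_at F1 z) (z - 1)) S = map (reset_at (reset_at F2 z) (z - 1)) S).
  { apply map_ext. intros w. unfold reset_at. destruct (Z.eq_dec w (z - 1)); auto.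
    destruct (Z.eq_dec w z); auto. unfold F1, F2, eta. rewrite count_move_other; auto. }
  rewrite Hrest, !(reset_at_other _ _ _ Hne). unfold F1, F2, eta.
  rewrite count_move_from, count_move_to by auto.
  assert (Hc : (count_occ Z.eq_dec X z > 0)%nat) by (apply count_occ_In; auto).
  destruct (count_occ Z.eq_dec X z) as [|e]; [lia|]. simpl pred.
  rewrite !qfact_S. ring.
Qed.

Lemma map_seq_shift {B} (f : nat -> B) k n :
  map f (seq k n) = map (fun j => f (k + j)%nat) (seq 0 n).
Proof.
  revert f k; induction n as [|n IH]; intros f k; simpl; auto.
  rewrite IH, (IH _ 1%nat), Nat.add_0_r. f_equal.
  apply map_ext; intros; f_equal; lia.
Qed.

(* The free evolution for a sorted configuration of N particles, under the exchange
   condition stated on lists.  F stands for u0(.; t) at a fixed time t. *)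
Section Exchange.

Variables (N : nat) (q : CC) (F : list Z -> CC).

Hypothesis exchange : forall L M y, length (L ++ y :: y :: M) = N ->
  F (L ++ y :: (y - 1)%Z :: M) =
  Csub (Cmul q (F (L ++ (y - 1)%Z :: y :: M))) (Cmul (Csub q Cone) (F (L ++ y :: y :: M))).

Lemma exchange_through_block P y k M :
  length (P ++ repeat y k ++ (y - 1)%Z :: M) = N ->
  F (P ++ repeat y k ++ (y - 1)%Z :: M) =
  Csub (Cmul (Cpow q k) (F (P ++ (y - 1)%Z :: repeat y k ++ M)))
       (Cmul (Csub (Cpow q k) Cone) (F (P ++ repeat y (S k) ++ M))).
Proof.
  revert M; induction k as [|k IH]; intros M Hlen; [simpl; ring|].
  assert (Hsplit : P ++ repeat y (S k) ++ (y - 1)%Z :: M = (P ++ repeat y k) ++ y :: (y - 1)%Z :: M)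
    by (rewrite <- app_assoc, <- repeat_snoc; reflexivity).
  assert (Hlen' : length (P ++ repeat y k ++ (y - 1)%Z :: y :: M) = N)
    by (rewrite !length_app, !repeat_length in *; simpl in *; lia).
  rewrite Hsplit, exchange by (rewrite Hsplit in Hlen; rewrite !length_app in *; simpl in *; lia).
  rewrite <- !app_assoc, IH by exact Hlen'.
  rewrite !repeat_snoc. simpl Cpow. ring.
Qed.

Lemma block_decrements_sum P y e M :
  length (P ++ repeat y (S e) ++ M) = N ->
  Csum (map (fun p => F (P ++ decr p (repeat y (S e) ++ M))) (seq 0 (S e))) =
  Csub (Cmul (qint q (S e)) (F (P ++ (y - 1)%Z :: repeat y e ++ M)))
       (Cmul (Csub (qint q (S e)) (RtoC (INR (S e)))) (F (P ++ repeat y (S e) ++ M))).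
Proof.
  intros Hlen.
  rewrite (map_ext_in _ (fun p => Csub (Cmul (Cpow q p) (F (P ++ (y - 1)%Z :: repeat y e ++ M)))
                         (Cmul (Csub (Cpow q p) Cone) (F (P ++ repeat y (S e) ++ M))))).
  - rewrite Csum_geometric, length_seq. reflexivity.
  - intros p Hp. apply in_seq in Hp.
    assert (Hfront : repeat y p ++ repeat y (e - p) ++ M = repeat y e ++ M)
      by (rewrite app_assoc, <- repeat_app; do 2 f_equal; lia).
    assert (Hall : repeat y (S p) ++ repeat y (e - p) ++ M = repeat y (S e) ++ M)
      by (rewrite app_assoc, <- repeat_app; do 2 f_equal; lia).
    rewrite decr_repeat, exchange_through_block, Hfront, Hall by
      (lia || (rewrite !length_app, !repeat_length in *; simpl; rewrite length_app, repeat_length; lia)).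
    reflexivity.
Qed.

Lemma decrements_sum Y P : Sorted Z.le Y -> length (P ++ Y) = N ->
  Csum (map (fun p => F (P ++ decr p Y)) (seq 0 (length Y))) =
  Cadd (Csum (map (fun z => Cmul (qint q (eta Y z)) (Csub (F (P ++ Xmove Y z)) (F (P ++ Y))))
                  (Lambda Y)))
       (Cmul (RtoC (INR (length Y))) (F (P ++ Y))).
Proof.
  remember (length Y) as n eqn:Hn. revert Y P Hn.
  induction n as [n IH] using lt_wf_ind; intros Y P Hn HS Hlen.
  destruct Y as [|y Y0]; [subst; simpl; change (RtoC 0) with Czero; ring|].
  destruct (sorted_first_block Y0 y HS) as [e [M [HY [Hlt HM]]]].
  rewrite HY in *. clear HY HS Y0.
  assert (Hy : ~ In y M) by (intro H; specialize (Hlt y H); lia).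
  rewrite length_app, repeat_length in Hn. subst n.
  rewrite seq_app, map_app, Csum_app, block_decrements_sum by exact Hlen.
  rewrite map_seq_shift.
  rewrite (map_ext _ (fun j => F ((P ++ repeat y (S e)) ++ decr j M))).
  2: { intros j. rewrite <- app_assoc, <- (decr_app (repeat y (S e))), repeat_length. reflexivity. }
  rewrite IH by (first [lia | exact HM | rewrite <- app_assoc; exact Hlen]).
  unfold Lambda, eta, Xmove. rewrite nodup_repeat by exact Hy. cbn [map].
  rewrite count_occ_app, count_repeat, (proj1 (count_occ_not_In Z.eq_dec M y) Hy).
  destruct (Z.eq_dec y y) as [_|]; [|congruence].
  assert (Hmove : move_first y (repeat y (S e) ++ M) = (y - 1)%Z :: repeat y e ++ M)
    by (simpl; destruct (Z.eq_dec y y); congruence).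
  rewrite Hmove.
  rewrite (map_ext_in (fun z => Cmul (qint q (count_occ Z.eq_dec (repeat y (S e) ++ M) z))
      (Csub (F (P ++ move_first z (repeat y (S e) ++ M))) (F (P ++ repeat y (S e) ++ M))))
    (fun z => Cmul (qint q (count_occ Z.eq_dec M z))
      (Csub (F ((P ++ repeat y (S e)) ++ move_first z M)) (F ((P ++ repeat y (S e)) ++ M))))).
  2: { intros z Hz. apply nodup_In in Hz. assert (z <> y) by (specialize (Hlt z Hz); lia).
       rewrite count_occ_app, count_repeat, move_first_repeat, <- !app_assoc by auto.
       destruct (Z.eq_dec y z); [congruence|]. reflexivity. }
  rewrite <- !app_assoc, Nat.add_0_r, plus_INR, RtoC_add. simpl. unfold Csum. simpl. ring.
Qed.

End Exchange.

(* The boundary condition of the statement, read on lists: two equal adjacent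
   particles y, y at coordinates i, i-1 are the entries of L ++ y :: y :: M. *)
Lemma exchange_on_lists N q (u0 : list Z -> R -> CC) t :
  (forall (l : list Z) (t : R) (i : nat) (y : Z), length l = N -> 0 <= t ->
     (2 <= i)%nat -> (i <= N)%nat ->
     u0 (upd (upd l i y) (i - 1) (y - 1)%Z) t =
     Csub (Cmul q (u0 (upd (upd l i (y - 1)%Z) (i - 1) y) t))
          (Cmul (Csub q Cone) (u0 (upd (upd l i y) (i - 1) y) t))) ->
  0 <= t ->
  forall L M y, length (L ++ y :: y :: M) = N ->
  u0 (L ++ y :: (y - 1)%Z :: M) t =
  Csub (Cmul q (u0 (L ++ (y - 1)%Z :: y :: M) t)) (Cmul (Csub q Cone) (u0 (L ++ y :: y :: M) t)).
Proof.
  intros Hexch Ht L M y Hlen.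
  set (i := S (S (length M))).
  assert (Hleft : forall v, upd (L ++ y :: y :: M) i v = L ++ v :: y :: M).
  { intros v. unfold upd, i. rewrite length_app. simpl length.
    replace (length L + S (S (length M)) - S (S (length M)))%nat with (length L + 0)%nat by lia.
    apply set_nth_app. }
  assert (Hright : forall v w, upd (L ++ v :: y :: M) (i - 1) w = L ++ v :: w :: M).
  { intros v w. unfold upd, i. rewrite length_app. simpl length.
    replace (length L + S (S (length M)) - (S (S (length M)) - 1))%nat
      with (length L + 1)%nat by lia.
    apply set_nth_app. }
  specialize (Hexch (L ++ y :: y :: M) t i y Hlen Ht).
  rewrite !Hleft, !Hright in Hexch. apply Hexch; unfold i; rewrite length_app in Hlen; simpl in Hlen; lia.
Qed.

Lemma jump_term q (u0 : list Z -> R -> CC) X y t :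
  (forall k : nat, (1 <= k)%nat -> qint q k <> Czero) -> In y X ->
  Cmul (qint q (eta (Xmove X y) (y - 1)%Z)) (uZRP q u0 (Xmove X y) t) =
  Cmul (Cmul (qint q (eta X y)) (u0 (Xmove X y) t)) (Cinv (norm_factor q X)).
Proof.
  intros Hq Hy.
  assert (HD := norm_factor_nz q X Hq).
  assert (HDmove := norm_factor_nz q (Xmove X y) Hq).
  assert (Hrate : qint q (eta (Xmove X y) (y - 1)%Z) =
                  Cdiv (Cmul (norm_factor q (Xmove X y)) (qint q (eta X y))) (norm_factor q X)).
  { unfold Xmove. rewrite norm_factor_move by exact Hy. field. exact HD. }
  change (uZRP q u0 (Xmove X y) t) with (Cdiv (u0 (Xmove X y) t) (norm_factor q (Xmove X y))).
  rewrite Hrate. field. split; assumption.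
Qed.

Lemma tazrp_master_equation N q (u0 : list Z -> R -> CC) X t :
  (forall k : nat, (1 <= k)%nat -> qint q k <> Czero) ->
  (forall L M y, length (L ++ y :: y :: M) = N ->
     u0 (L ++ y :: (y - 1)%Z :: M) t =
     Csub (Cmul q (u0 (L ++ (y - 1)%Z :: y :: M) t)) (Cmul (Csub q Cone) (u0 (L ++ y :: y :: M) t))) ->
  length X = N -> Sorted Z.le X ->
  has_deriv_nonneg (fun s => u0 X s) t
    (Csub (Csum (map (fun i => u0 (upd X i (coord X i - 1)%Z) t) (seq 1 N)))
          (Cmul (RtoC (INR N)) (u0 X t))) ->
  has_deriv_nonneg (fun s => uZRP q u0 X s) t
    (Csub
       (Csum (map (fun y => Cmul (qint q (eta (Xmove X y) (y - 1)%Z))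
                                 (uZRP q u0 (Xmove X y) t)) (Lambda X)))
       (Cmul (Csum (map (fun y => qint q (eta X y)) (Lambda X))) (uZRP q u0 X t))).
Proof.
  intros Hq Hexch HlX HX Hfree.
  subst N.
  (* d/dt u0(X) = sum_{y in Lambda(X)} [eta_X(y)]_q (u0(X^y) - u0(X)); divide by D(X). *)
  rewrite (coordinate_sum_as_positions (fun l => u0 l t)) in Hfree.
  pose proof (decrements_sum (length X) q (fun l => u0 l t) Hexch X [] HX eq_refl) as Hsum.
  cbn [app] in Hsum. rewrite Hsum in Hfree.
  pose proof (deriv_scale _ _ _ (Cinv (norm_factor q X)) Hfree) as Hd.
  rewrite (map_ext_in _ (fun y => Cmul (Cmul (qint q (eta X y)) (u0 (Xmove X y) t))
                                       (Cinv (norm_factor q X)))).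
  2: { intros y Hy. apply jump_term; [exact Hq | apply (nodup_In Z.eq_dec), Hy]. }
  rewrite (Csum_weighted_differences _ _ _ (u0 X t)).
  change (uZRP q u0 X t) with (Cmul (u0 X t) (Cinv (norm_factor q X))).
  refine (eq_ind _ (has_deriv_nonneg _ t) Hd _ _). ring.
Qed.

Theorem proposition1 (N : nat) (q : CC) (u0 : list Z -> R -> CC) :
  (1 <= N)%nat ->
  (forall k : nat, (1 <= k)%nat -> qint q k <> Czero) ->
  (* forward (free) evolution equation *)
  (forall (l : list Z) (t : R), length l = N -> 0 <= t ->
     has_deriv_nonneg (fun s => u0 l s) t
       (Csub (Csum (map (fun i => u0 (upd l i (coord l i - 1)%Z) t) (seq 1 N)))
             (Cmul (RtoC (INR N)) (u0 l t)))) ->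
  (* boundary (exchange) condition *)
  (forall (l : list Z) (t : R) (i : nat) (y : Z), length l = N -> 0 <= t ->
     (2 <= i)%nat -> (i <= N)%nat ->
     u0 (upd (upd l i y) (i - 1) (y - 1)%Z) t =
     Csub (Cmul q (u0 (upd (upd l i (y - 1)%Z) (i - 1) y) t))
          (Cmul (Csub q Cone) (u0 (upd (upd l i y) (i - 1) y) t))) ->
  forall (X : list Z) (K n : nat) (x : Z),
    length X = N -> in_S X ->
    (1 <= n)%nat -> (K + n <= N)%nat ->
    (forall i : nat, (K + 1 <= i)%nat -> (i <= K + n)%nat -> coord X i = x) ->
    (forall y : Z, In y (Lambda X) -> y <> x -> eta X y = 1%nat) ->
    forall t : R, 0 <= t ->
      has_deriv_nonneg (fun s => uZRP q u0 X s) t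
        (Csub
           (Csum (map (fun y => Cmul (qint q (eta (Xmove X y) (y - 1)%Z))
                                     (uZRP q u0 (Xmove X y) t)) (Lambda X)))
           (Cmul (Csum (map (fun y => qint q (eta X y)) (Lambda X)))
                 (uZRP q u0 X t))).
Proof.
  intros _ Hq Hfree Hexch X _ _ _ HlX HinS _ _ _ _ t Ht.
  apply (tazrp_master_equation N); auto.
  - exact (exchange_on_lists N q u0 t Hexch Ht).
  - exact (in_S_sorted X HinS).
Qed.
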